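(* Let $\mathbb{T}=\mathbb{R}/(2\pi\mathbb{Z})$, let $g\in\mathcal{P}(\mathbb{R})$ have finite first moment, and let $m(\mathrm{d}x)=\frac{1}{2\pi}\mathrm{d}x$ be the uniform probability measure on $\mathbb{T}$. For all $\kappa\ge 0$ and all $\beta,\sigma>0$, the product measure $m\otimes g\in\mathcal{P}(\mathbb{T}\times\mathbb{R})$ is a stationary MFG equilibrium with intrinsic frequency distribution $g$.
   Context: For $x\in\mathbb{T}$ and $\mu\in\mathcal{P}(\mathbb{T}\times\mathbb{R})$ set $c(x,\mu):=\int_{\mathbb{T}\times\mathbb{R}}2\sin^2\big(\frac{x-y}{2}\big)\mu(\mathrm{d}y,\mathrm{d}\omega)$. Fix a filtered probability space $(\Omega,\mathbb{F},\mathbb{P})$ satisfying the usual conditions and supporting an $\mathbb{F}$-Brownian motion $B$, such that for every $\nu_0\in\mathcal{P}(\mathbb{T})$ there is an $\mathcal{F}_0$-measurable $\mathbb{T}$-valued random variable with law $\nu_0$. Let $\mathcal{A}$ be the set of square-integrable $\mathbb{F}$-progressively measurable real processes $\alpha$ on $[0,\infty)$. For a flow $(\mu_t)_{t\ge0}\subset\mathcal{P}(\mathbb{T}\times\mathbb{R})$ whose second marginal is $g$ for every $t$, write (disintegration) $\mu_t(\mathrm{d}x,\mathrm{d}\omega)=\mu^\omega_t(\mathrm{d}x)g(\mathrm{d}\omega)$. For $\omega\in\mathbb{R}$ and $\alpha\in\mathcal{A}$, let $X^{\omega,\alpha}_t=X^\omega_0+\int_0^t\alpha_s\mathrm{d}s+\omega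 t+\sigma B_t$ (on $\mathbb{T}$) with $X^\omega_0$ $\mathcal{F}_0$-measurable of law $\mu^\omega_0$, and $J^{\omega,\mu}(\alpha):=\mathbb{E}\int_0^\infty e^{-\beta t}\big[\frac12\alpha_t^2+\kappa c(X^{\omega,\alpha}_t,\mu_t)\big]\mathrm{d}t$. The flow $(\mu_t)$ is a solution of the MFG problem with intrinsic frequency distribution $g$ if (i) the second marginal of every $\mu_t$ is $g$, and (ii) there is a Borel set $E$ with $g(E)=1$ such that for every $\omega\in E$ the disintegration holds with $\mu^\omega_t\in\mathcal{P}(\mathbb{T})$ and there exists $\alpha^\omega_*\in\mathcal{A}$ with $\inf_{\alpha\in\mathcal{A}}J^{\omega,\mu}(\alpha)=J^{\omega,\mu}(\alpha^\omega_* )$ and $\mathcal{L}(X^{\omega,\alpha^\omega_*}_t)=\mu^\omega_t$ for all $t\ge0$. A measure $\mu\in\mathcal{P}(\mathbb{T}\times\mathbb{R})$ is a stationary MFG equilibrium with intrinsic frequency distribution $g$ if the constant flow $\mu_t=\mu$ is such a solution. *)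

From HB Require Import structures.
From mathcomp Require Import all_boot all_order all_algebra.
From mathcomp Require Import all_classical all_reals all_analysis.
From mathcomp Require Import measurable_realfun lebesgue_measure lebesgue_integral.
Set Implicit Arguments. Unset Strict Implicit. Unset Printing Implicit Defensive.
Import Order.TTheory GRing.Theory Num.Theory.
Import numFieldNormedType.Exports.
Local Open Scope classical_set_scope.
Local Open Scope ring_scope.

Notation Rm R := (measurableTypeR R).

(* The torus T = R/(2 pi Z) is represented by the fundamental domain [0, 2pi);
   a T-valued quantity given by a real number x is identified with tmod x. *)
Definition tmod {R : realType} (x : R) : R :=
  x - (pi *+ 2) * (Num.floor (x / (pi *+ 2)))%:~R.

Definition torus_dom {R : realType} : set (Rm R) := `[0, pi *+ 2[.

(* nu is (the representation on [0,2pi) of) an element of P(T) *)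
Definition is_prob_T {R : realType} (nu : set (Rm R) -> \bar R) : Prop :=
  nu setT = 1%E /\ nu torus_dom = 1%E.

(* mu is (the representation on [0,2pi) x R of) an element of P(T x R) *)
Definition is_prob_TR {R : realType} (mu : set (Rm R * Rm R) -> \bar R) : Prop :=
  mu setT = 1%E /\ mu (torus_dom `*` setT) = 1%E.

Definition cost_c {R : realType} (x : R) (mu : {measure set (Rm R * Rm R) -> \bar R})
  : \bar R :=
  (\int[mu]_(p in setT) (2 * sin ((x - p.1) / 2) ^+ 2)%:E)%E.

Definition halfline {R : realType} : set (Rm R) := `[(0:R), +oo[%classic.

Lemma pi2_gt0 {R : realType} : (0 : R) < pi *+ 2.
Proof. by rewrite pmulrn_lgt0 // pi_gt0. Qed.

Definition unifT {R : realType} : {measure set (Rm R) -> \bar R} :=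
  uniform_prob (@pi2_gt0 R).

Section Stochastic.
Context {R : realType} {d : measure_display} {Omega : measurableType d}.
Variable P : probability Omega R.

Definition measurable_wrt (G : set (set Omega)) (X : Omega -> R) : Prop :=
  forall U : set (Rm R), measurable U -> G (X @^-1` U).

Definition indep_of (G : set (set Omega)) (X : Omega -> R) : Prop :=
  forall (A : set Omega) (U : set (Rm R)), G A -> measurable U ->
    P (A `&` X @^-1` U) = (P A * P (X @^-1` U))%E.

Definition usual_filtration (F : R -> set (set Omega)) : Prop :=
  [/\ forall t, 0 <= t -> sigma_algebra setT (F t) /\ F t `<=` measurable,
      forall s t, 0 <= s -> s <= t -> F s `<=` F t,
      forall N : set Omega, measurable N -> P N = 0%E ->
        forall A, A `<=` N -> F 0 A
    & forall t, 0 <= t -> forall A, (forall s, t < s -> F s A) -> F t A].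

Definition F_brownian (F : R -> set (set Omega)) (B : R -> Omega -> R) : Prop :=
  [/\ forall t, 0 <= t -> measurable_wrt (F t) (B t),
      {ae P, forall w, B 0 w = 0 /\ {within (halfline : set R), continuous (fun t => B t w)}}
    & forall s t, 0 <= s -> s < t ->
        indep_of (F s) (fun w => B t w - B s w) /\
        forall U : set (Rm R), measurable U ->
          P ((fun w => B t w - B s w) @^-1` U) = normal_prob 0 (Num.sqrt (t - s)) U].

Definition law_T (X : Omega -> R) (nu : set (Rm R) -> \bar R) : Prop :=
  forall U : set (Rm R), measurable U -> P ((fun w => tmod (X w)) @^-1` U) = nu U.

Definition prog_measurable (F : R -> set (set Omega)) (a : R -> Omega -> R) : Prop :=
  forall t : R, 0 <= t -> forall U : set (Rm R), measurable U ->
    let I : set (Rm R) := `[0, t]%classic in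
    <<s I `*` [set: Omega],
        [set C : set (Rm R * Omega) | exists (A : set (Rm R)) (Bs : set Omega),
           [/\ measurable A, A `<=` I, F t Bs & C = A `*` Bs]] >>
      ((I `*` [set: Omega]) `&` [set p | U (a p.1 p.2)]).

Definition admissible (F : R -> set (set Omega)) (a : R -> Omega -> R) : Prop :=
  prog_measurable F a /\
  (\int[P]_(w in setT) \int[lebesgue_measure]_(s in halfline)
      ((a s w) ^+ 2)%:E < +oo)%E.

Definition state (sigma : R) (B : R -> Omega -> R) (X0 : Omega -> R)
  (om : R) (a : R -> Omega -> R) : R -> Omega -> R :=
  fun t w => X0 w + Rintegral lebesgue_measure (`[0, t]%classic : set (Rm R)) (fun s => a s w)
             + om * t + sigma * B t w.

Definition cost_J (beta kappa sigma : R) (B : R -> Omega -> R) (X0 : Omega -> R)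
  (om : R) (mu : R -> {measure set (Rm R * Rm R) -> \bar R}) (a : R -> Omega -> R)
  : \bar R :=
  (\int[P]_(w in setT) \int[lebesgue_measure]_(t in halfline)
     ((expR (- (beta * t)))%:E *
      (((a t w) ^+ 2 / 2)%:E
       + kappa%:E * cost_c (state sigma B X0 om a t w) (mu t))))%E.

Definition MFG_solution (F : R -> set (set Omega)) (B : R -> Omega -> R)
  (beta kappa sigma : R) (g : {measure set (Rm R) -> \bar R})
  (mu : R -> {measure set (Rm R * Rm R) -> \bar R}) : Prop :=
  (forall t, 0 <= t -> is_prob_TR (mu t) /\
     forall Bs : set (Rm R), measurable Bs -> mu t (setT `*` Bs) = g Bs) /\
  exists (mw : R -> R -> {measure set (Rm R) -> \bar R}) (E : set (Rm R)),
    [/\ measurable E, g E = 1%E,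
        forall t, 0 <= t -> forall A : set (Rm R), measurable A ->
          measurable_fun [set: Rm R] (fun om : Rm R => mw t om A) /\
          forall Bs : set (Rm R), measurable Bs ->
            mu t (A `*` Bs) = (\int[g]_(om in Bs) mw t om A)%E
      & forall om, E om ->
          (forall t, 0 <= t -> is_prob_T (mw t om)) /\
          forall X0 : Omega -> R, measurable_wrt (F 0) X0 ->
            (forall w, torus_dom (X0 w)) -> law_T X0 (mw 0 om) ->
            exists astar : R -> Omega -> R,
              [/\ admissible F astar,
                  ereal_inf [set cost_J beta kappa sigma B X0 om mu a
                            | a in admissible F]
                    = cost_J beta kappa sigma B X0 om mu astar
                & forall t, 0 <= t ->
                    law_T (state sigma B X0 om astar t) (mw t om)]].

Definition stationary_MFG_equilibrium (F : R -> set (set Omega))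
  (B : R -> Omega -> R) (beta kappa sigma : R) (g : {measure set (Rm R) -> \bar R})
  (mu : {measure set (Rm R * Rm R) -> \bar R}) : Prop :=
  MFG_solution F B beta kappa sigma g (fun _ => mu).

End Stochastic.

Definition rich_F0 {R : realType} {d : measure_display} {Omega : measurableType d}
  (P : probability Omega R) (F : R -> set (set Omega)) : Prop :=
  forall nu0 : {measure set (Rm R) -> \bar R}, is_prob_T nu0 ->
    exists X0 : Omega -> R, [/\ measurable_wrt (F 0) X0,
      forall w, torus_dom (X0 w) & law_T P X0 nu0].

From HB Require Import structures.
From mathcomp Require Import all_boot all_order all_algebra.
From mathcomp Require Import all_classical all_reals all_analysis.
From mathcomp Require Import measurable_realfun lebesgue_measure lebesgue_integral.
From mathcomp Require Import ring lra.
Import Order.TTheory GRing.Theory Num.Theory.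
Set Implicit Arguments. Unset Strict Implicit. Unset Printing Implicit Defensive.
Local Open Scope classical_set_scope.
Local Open Scope ring_scope.

(* The uniform law m on the torus is invariant under every rotation x |-> x + w
   (mod 2 pi).  Hence, against m \x g, the interaction cost
   c(x, m \x g) = int (1 - cos (x - y)) m(dy) equals 1 for every x, so the running
   cost reduces to alpha^2/2 + kappa and the zero control is optimal.  Under the
   zero control the state is X0 + omega t + sigma (B t - B 0) almost surely, with X0
   uniform and independent of the Brownian increment; conditioning on the increment
   shows that this sum is again uniform, so the flow stays at m \x g. *)

Lemma periodicz (U V : zmodType) (f : U -> V) (T : U) :
  periodic f T -> forall (k : int) (a : U), f (a + T *~ k) = f a.
Proof.
move=> fT [] n a; first exact: periodicn.
by rewrite NegzE mulrNz -[in RHS](subrK (T *+ n.+1) a) periodicn.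
Qed.

Section torus.
Context {R : realType}.
Local Notation tau := (pi *+ 2 : R).

Lemma tmod_itv (x : R) : 0 <= tmod x < tau.
Proof.
have tau_gt0 := @pi2_gt0 R.
have /andP[fl_le lt_fl] := floor_itv (x / tau).
rewrite ler_pdivlMr // in fl_le; rewrite intrD ltr_pdivrMr // in lt_fl.
by rewrite /tmod; apply/andP; split; lra.
Qed.

Lemma tmod_id (x : R) : 0 <= x < tau -> tmod x = x.
Proof.
move=> /andP[x_ge0 x_lt]; have tau_gt0 := @pi2_gt0 R.
rewrite /tmod (_ : Num.floor _ = 0) ?mulr0 ?subr0 //.
apply: floor_def; rewrite add0r divr_ge0 ?(ltW tau_gt0) //=.
by rewrite ltr_pdivrMr // mul1r.
Qed.

Lemma tmodDz (x : R) (k : int) : tmod (x + tau * k%:~R) = tmod x.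
Proof.
have tau_neq0 : tau != 0 by rewrite gt_eqF // pi2_gt0.
rewrite /tmod (_ : (x + tau * k%:~R) / tau = x / tau + k%:~R); last first.
  by rewrite mulrDl mulrAC divff // mul1r.
by rewrite floorDrz ?intr_int // intrKfloor intrD; ring.
Qed.

Lemma tmodDtmod (x w : R) : tmod (x + tmod w) = tmod (x + w).
Proof.
have -> : x + w = x + tmod w + tau * (Num.floor (w / tau))%:~R by rewrite /tmod; ring.
by rewrite tmodDz.
Qed.

Lemma tmodD_itv (x v : R) : 0 <= x < tau -> 0 <= v < tau ->
  tmod (x + v) = if x + v < tau then x + v else x + v - tau.
Proof.
move=> /andP[x_ge0 x_lt] /andP[v_ge0 v_lt].
case: ifPn => [lt_tau|]; first by rewrite tmod_id // addr_ge0.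
rewrite -leNgt => ge_tau.
rewrite -[in LHS](subrK tau (x + v)) -[X in _ + X]mulr1.
by rewrite (tmodDz _ 1) tmod_id //; apply/andP; split; lra.
Qed.

Lemma measurable_tmod : measurable_fun setT (@tmod R).
Proof.
apply: measurable_funB => //; apply: nondecreasing_measurable => // x y le_xy.
have tau_gt0 := @pi2_gt0 R.
by rewrite ler_pM2l // ler_int le_floor // ler_pM2r // invr_gt0.
Qed.

Lemma cos_tmod (y x : R) : cos (y - tmod x) = cos (y - x).
Proof.
have -> : y - x = y - tmod x + tau *~ (- Num.floor (x / tau)).
  by rewrite -mulrzr /tmod intrN; ring.
by rewrite (periodicz (@cosD2pi R)).
Qed.

End torus.

Section lebesgue_translation.
Context {R : realType}.
Local Notation lambda := (@lebesgue_measure R).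

Lemma measurable_translation (c : R) (A : set (Rm R)) : measurable A ->
  measurable ((fun x : Rm R => x + c) @^-1` A).
Proof. by move=> mA; rewrite -[_ @^-1` _]setTI; exact: measurable_funD. Qed.

Lemma lebesgue_measure_translation (c : R) (A : set (Rm R)) : measurable A ->
  lambda ((fun x : Rm R => x + c) @^-1` A) = lambda A.
Proof.
(* [mc] is the side condition under which [pushforward] is a measure. *)
have mc : measurable_fun setT (fun x : Rm R => x + c) by exact: measurable_funD.
move=> mA; rewrite [RHS](lebesgue_measure_unique
  (mu := pushforward lambda (fun x : Rm R => x + c : Rm R))) //.
move=> _ /ocitvP[->|[[a b] /= lt_ab ->]]; first by rewrite !measure0.
rewrite /pushforward (_ : _ @^-1` _ = `]a - c, b - c]%classic); last first.
  by apply/seteqP; split => x /=; rewrite !in_itv /= => /andP[? ?]; apply/andP; split; lra.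
rewrite !lebesgue_measure_itv /= !lte_fin ltrD2r lt_ab -!EFinD.
by congr (_%:E); ring.
Qed.

Lemma lebesgue_measureI_itv_cc_co (A : set (Rm R)) (a b : R) : measurable A ->
  lambda (A `&` `[a, b]) = lambda (A `&` `[a, b[).
Proof.
move=> mA.
have -> : A `&` `[a, b] = (A `&` `[a, b[) `|` (A `&` `[a, b] `&` [set b]).
  apply/seteqP; split => [x [Ax]|x [[Ax]|[[Ax] //]]]; rewrite /= !in_itv /=.
  - move=> /andP[ax xb]; have [lt_xb|ge_xb] := ltP x b; [left|right].
      by split => //; rewrite ax.
    by split; [split => //; rewrite ax xb|apply/le_anti; rewrite xb ge_xb].
  - by move=> /andP[-> /ltW ->].
have mB : measurable (A `&` `[a, b] `&` [set b]) by do 2 apply: measurableI => //.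
apply: measureU0 => //; first exact: measurableI.
exact: (subset_measure0 mB _ _ (@lebesgue_measure_set1 R b)).
Qed.

End lebesgue_translation.

Section uniform_torus.
Context {R : realType}.
Local Notation tau := (pi *+ 2 : R).
Local Notation lambda := (@lebesgue_measure R).

Lemma unifTE (A : set (Rm R)) : measurable A ->
  (unifT A = (tau^-1)%:E * lambda (A `&` torus_dom))%E.
Proof.
move=> mA; rewrite /unifT /= /uniform_prob integral_uniform_pdf.
rewrite (eq_integral (fun=> ((tau - 0)^-1)%:E)); last first.
  by move=> x; rewrite inE /= => -[_]; rewrite in_itv /uniform_pdf /= => ->.
by rewrite integral_cst /= ?subr0 ?lebesgue_measureI_itv_cc_co //; exact: measurableI.
Qed.

Lemma unifT_setT : unifT [set: Rm R] = 1%E.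
Proof. exact: probability_setT (uniform_prob (@pi2_gt0 R)). Qed.

Lemma unifT_torus_dom : unifT (torus_dom : set (Rm R)) = 1%E.
Proof.
have tau_gt0 := @pi2_gt0 R.
rewrite unifTE ?setIid /torus_dom ?lebesgue_measure_itv /= ?lte_fin ?tau_gt0 //.
by rewrite oppr0 adde0 -EFinM mulVf // gt_eqF.
Qed.

Lemma is_prob_T_unifT : is_prob_T (@unifT R).
Proof. by split; [exact: unifT_setT|exact: unifT_torus_dom]. Qed.

Section rotation_itv.
Variable v : R.
Hypothesis v_itv : 0 <= v < tau.

Lemma rotation_preimageI_torus_dom (U : set (Rm R)) :
  [set x : Rm R | U (tmod (x + v))] `&` torus_dom =
  (fun x => x + v) @^-1` (U `&` `[v, tau[) `|`
  (fun x => x + (v - tau)) @^-1` (U `&` `[0, v[).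
Proof.
have /andP[v_ge0 v_lt] := v_itv.
apply/seteqP; split => x /=; rewrite /torus_dom /= !in_itv /=.
- case=> + /andP[x_ge0 x_lt]; rewrite tmodD_itv ?x_ge0 ?v_ge0 //.
  case: ifPn => [lt_tau Ux|]; first by left; split => //; apply/andP; split; lra.
  rewrite -leNgt addrA => ge_tau Ux; right; split => //; apply/andP; split; lra.
- case=> -[Ux /andP[lb ub]]; (have x_itv : 0 <= x < tau by apply/andP; split; lra);
    rewrite tmodD_itv //.
  + by rewrite ub.
  + have ge_tau : tau <= x + v by lra.
    by rewrite ltNge ge_tau -addrA.
Qed.

Lemma lebesgue_measure_rotation_itv (U : set (Rm R)) : measurable U ->
  lambda ([set x : Rm R | U (tmod (x + v))] `&` torus_dom) = lambda (U `&` torus_dom).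
Proof.
have /andP[v_ge0 v_lt] := v_itv.
move=> mU; rewrite rotation_preimageI_torus_dom.
have mUI (i : interval R) : measurable (U `&` [set` i]) by exact: measurableI.
have -> : U `&` torus_dom = (U `&` `[v, tau[) `|` (U `&` `[0, v[).
  apply/seteqP; split => x /=; rewrite /torus_dom /= !in_itv /=.
  - case=> Ux /andP[x_ge0 x_lt]; have [le_vx|lt_xv] := leP v x; [left|right].
      by split => //; rewrite le_vx.
    by split => //; rewrite x_ge0.
  - by case=> -[Ux /andP[lb ub]]; split => //; apply/andP; split; lra.
rewrite !measureU //; try exact: measurable_translation.
- by congr (_ + _)%E; exact: lebesgue_measure_translation.
- apply/seteqP; split => x //= -[[_ +] [_ +]].
  by rewrite !in_itv /= => /andP[? ?] /andP[? ?]; lra.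
- apply/seteqP; split => x //= -[[_ +] [_ +]].
  by rewrite !in_itv /= => /andP[? ?] /andP[? ?]; lra.
Qed.

End rotation_itv.

Variable w : R.

Lemma lebesgue_measure_rotation (U : set (Rm R)) : measurable U ->
  lambda ([set x : Rm R | U (tmod (x + w))] `&` torus_dom) = lambda (U `&` torus_dom).
Proof.
have -> : [set x : Rm R | U (tmod (x + w))] = [set x | U (tmod (x + tmod w))].
  by apply/seteqP; split => x /=; rewrite tmodDtmod.
by apply: lebesgue_measure_rotation_itv; exact: tmod_itv.
Qed.

Lemma measurable_rotation (U : set (Rm R)) : measurable U ->
  measurable [set x : Rm R | U (tmod (x + w))].
Proof.
move=> mU; rewrite -[X in measurable X]setTI.
by apply: (measurableT_comp measurable_tmod) => //; exact: measurable_funD.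
Qed.

Lemma unifT_rotation (U : set (Rm R)) : measurable U ->
  unifT [set x : Rm R | U (tmod (x + w))] = unifT U.
Proof.
move=> mU; rewrite !unifTE ?lebesgue_measure_rotation //; exact: measurable_rotation.
Qed.

End uniform_torus.

Lemma ge0_integral_image d1 d2 (X : measurableType d1) (Y : measurableType d2)
    (R : realType) (mu : {measure set X -> \bar R}) (nu : {measure set Y -> \bar R})
    (phi : X -> Y) (f : Y -> \bar R) :
  measurable_fun setT phi -> (forall A, measurable A -> mu (phi @^-1` A) = nu A) ->
  measurable_fun setT f -> (forall y, (0 <= f y)%E) ->
  (\int[mu]_x f (phi x) = \int[nu]_y f y)%E.
Proof.
move=> mphi mu_nu mf f0.
transitivity (\int[pushforward mu phi]_y f y)%E.
  by rewrite ge0_integral_pushforward // preimage_setT.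
by apply: eq_measure_integral => A mA _; exact: mu_nu.
Qed.

Section uniform_torus_integral.
Context {R : realType}.
Local Open Scope ereal_scope.

Lemma ge0_integral_unifT_rotation (w : R) (f : Rm R -> \bar R) :
  measurable_fun setT f -> (forall y, 0 <= f y) ->
  \int[unifT]_x f (tmod (x + w)) = \int[unifT]_x f x.
Proof.
apply: ge0_integral_image => [|A mA]; last exact: unifT_rotation.
by apply: (measurableT_comp measurable_tmod); exact: measurable_funD.
Qed.

Lemma measurable_cosB (x : R) : measurable_fun setT (fun y : Rm R => cos (x - y)).
Proof.
apply: (measurableT_comp (continuous_measurable_fun (@continuous_cos R))).
exact: measurable_funB.
Qed.

(* Rotating by [pi] turns [1 - cos] into [1 + cos], and the two integrals add up to 2. *)
Lemma integral_unifT_1Bcos (x : R) : \int[unifT]_y (1 - cos (x - y))%:E = 1.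
Proof.
have mcos := measurable_cosB x.
have cos_bounds y : (-1 <= cos (x - y) <= 1)%R by rewrite cos_geN1 cos_le1.
set I := \int[unifT]_y _.
have I_ge0 : 0 <= I.
  by apply: integral_ge0 => y _; have := cos_bounds y; rewrite lee_fin; lra.
have I_add : I + I = 2.
  transitivity (\int[unifT]_y (1 + cos (x - y))%:E + I); first congr (_ + _).
    rewrite /I -(ge0_integral_unifT_rotation pi); last 2 first.
    - by apply/measurable_EFinP; exact: measurable_funB.
    - by move=> y; have := cos_bounds y; rewrite lee_fin; lra.
    apply: eq_integral => y _.
    have := cosDpi (x - y - pi)%R; rewrite subrK => ->.
    by rewrite cos_tmod opprD addrA.
  rewrite /I -ge0_integralD //; last 2 first.
  - by apply/measurable_EFinP; exact: measurable_funD.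
  - by apply/measurable_EFinP; exact: measurable_funB.
  rewrite (eq_integral (fun _ => 2%:E)) => [|y _]; last first.
    by rewrite -EFinD addrACA subrr addr0.
  by rewrite integral_cst //= unifT_setT mule1.
clearbody I; move: I I_ge0 I_add => [r| |] //= _.
by rewrite -EFinD => -[r2]; congr (_%:E); lra.
Qed.

Lemma sin_half_sqrE (u : R) : (2 * sin (u / 2) ^+ 2 = 1 - cos u)%R.
Proof. by rewrite [in RHS](splitr u) -mulr2n cos_mulr2n cos2sin2; ring. Qed.

Lemma cost_c_unifT (g : probability (Rm R) R) (x : R) : cost_c x (unifT \x g) = 1.
Proof.
rewrite /cost_c -(integral_unifT_1Bcos x).
under eq_integral do rewrite sin_half_sqrE.
apply: (ge0_integral_image (phi := fst) (f := fun y : Rm R => (1 - cos (x - y))%:E)).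
- exact: measurable_fst.
- move=> A mA; rewrite -setXT.
  apply: eq_trans (product_measure1E unifT g mA measurableT) _.
  by rewrite [X in _ * X]probability_setT mule1.
- by apply/measurable_EFinP; apply: measurable_funB => //; exact: measurable_cosB.
- by move=> y; have := cos_le1 (x - y); rewrite -subr_ge0 -lee_fin.
Qed.

Section product.
Variable g : probability (Rm R) R.

Lemma is_prob_TR_product_unifT : is_prob_TR (unifT \x g).
Proof.
split; first rewrite -setXTT.
  apply: eq_trans (product_measure1E unifT g measurableT measurableT) _.
  by rewrite unifT_setT [X in _ * X]probability_setT mule1.
apply: eq_trans (product_measure1E unifT g (measurable_itv _) measurableT) _.
by rewrite unifT_torus_dom [X in _ * X]probability_setT mule1.
Qed.

Lemma product_unifT_setTX (Bs : set (Rm R)) : measurable Bs ->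
  (unifT \x g) (setT `*` Bs) = g Bs.
Proof.
move=> mBs; apply: eq_trans (product_measure1E unifT g measurableT mBs) _.
by rewrite unifT_setT mul1e.
Qed.

End product.

End uniform_torus_integral.

Section law_of_rotation.
Context {R : realType} d (Omega : measurableType d) (P : probability Omega R).

(* The joint law of [(Z, Y)] is [m \x unifT], and every section of the event is
   a rotated copy of [U]. *)
Lemma law_T_add_independent_uniform (Y Z : Omega -> R) (m : probability (Rm R) R)
    (c s : R) :
  measurable_fun setT (Y : Omega -> Rm R) -> measurable_fun setT (Z : Omega -> Rm R) ->
  (forall A B : set (Rm R), measurable A -> measurable B ->
    P (Z @^-1` A `&` Y @^-1` B) = (m A * unifT B)%E) ->
  law_T P (fun w => Y w + (c + s * Z w)) unifT.
Proof.
move=> mY mZ indep U mU.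
pose h w : Rm R * Rm R := (Z w, Y w).
have mh : measurable_fun setT h by exact: measurable_fun_pair.
pose S := [set p : Rm R * Rm R | U (tmod (p.2 + (c + s * p.1)))].
have mS : measurable S.
  rewrite -[S]setTI; apply: (measurableT_comp measurable_tmod) => //.
  by apply: measurable_funD => //; apply: measurable_funD => //; exact: measurable_funM.
transitivity (pushforward P h S); first by [].
rewrite -(product_measure_unique (m1 := m) (m2 := uniform_prob (@pi2_gt0 R))) //.
  rewrite /product_measure1 /= (eq_integral (fun=> unifT U)) => [|z _].
    by rewrite integral_cst // [X in (_ * X)%E]probability_setT mule1.
  rewrite -(unifT_rotation (c + s * z) mU); congr (unifT _).
  by apply/seteqP; split => y /=; rewrite /xsection /= inE.
Qed.

End law_of_rotation.

Section measure_facts.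
Context d (T : measurableType d) (R : realType).
Local Open Scope ereal_scope.

Lemma measure_eq_modulo_null (mu : {measure set T -> \bar R}) (S1 S2 N : set T) :
  measurable S1 -> measurable S2 -> measurable N -> mu N = 0 ->
  S1 `|` N = S2 `|` N -> mu S1 = mu S2.
Proof.
by move=> mS1 mS2 mN muN0 eqSN; rewrite -(measureU0 mS1 mN muN0) eqSN measureU0.
Qed.

(* Nonnegative integrals are monotone even without measurability, since they are
   suprema over the simple functions below the integrand. *)
Lemma ge0_le_integral_nonmeasurable (mu : {measure set T -> \bar R}) (D : set T)
    (f1 f2 : T -> \bar R) :
  (forall x, D x -> 0 <= f1 x) -> (forall x, D x -> f1 x <= f2 x) ->
  \int[mu]_(x in D) f1 x <= \int[mu]_(x in D) f2 x.
Proof.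
move=> f1_ge0 le_f12.
have f2_ge0 x : D x -> 0 <= f2 x by move=> Dx; exact: le_trans (f1_ge0 _ Dx) (le_f12 _ Dx).
rewrite (ge0_integralE _ f1_ge0) (ge0_integralE _ f2_ge0).
apply: ge_ereal_sup => _ [h h_le <-]; apply: ereal_sup_ubound; exists h => // x.
apply: le_trans (h_le x) _; rewrite /patch; case: ifPn => // /set_mem Dx; exact: le_f12.
Qed.

End measure_facts.

Section zero_control.
Context {R : realType} d (Omega : measurableType d) (P : probability Omega R).
Variable F : R -> set (set Omega).
Hypothesis F_usual : usual_filtration P F.

Lemma usual_filtration_measurable t : 0 <= t -> F t `<=` measurable.
Proof. by case: F_usual => + _ _ _ => /[apply] -[]. Qed.

Lemma usual_filtration_setT t : 0 <= t -> F t setT.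
Proof.
case: F_usual => + _ _ _ => /[apply] -[[F0 FC _] _].
by have := FC _ F0; rewrite setD0.
Qed.

Lemma measurable_wrt_filtration (t : R) (X : Omega -> R) : 0 <= t ->
  measurable_wrt (F t) X -> measurable_fun setT (X : Omega -> Rm R).
Proof.
by move=> t_ge0 mX _ U mU; rewrite setTI; exact: usual_filtration_measurable (mX _ mU).
Qed.

Lemma admissible_zero_control : admissible P F (fun _ _ => 0).
Proof.
split.
  move=> t t_ge0 U _ I /=; have [U0|nU0] := pselect (U 0).
    have -> : I `*` [set: Omega] `&` [set _ | U 0] = I `*` [set: Omega].
      by apply/seteqP; split => [p []|p].
    apply: sub_sigma_algebra; exists I, setT.
    by split => //; [exact: measurable_itv|exact: usual_filtration_setT].
  have -> : I `*` [set: Omega] `&` [set _ | U 0] = set0.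
    by apply/seteqP; split => p // -[].
  exact: sigma_algebra0.
under eq_integral do under eq_integral do rewrite expr0n /=.
by rewrite !integral0.
Qed.

Variables (beta kappa sigma om : R) (B : R -> Omega -> R) (X0 : Omega -> R).
Variable g : probability (Rm R) R.
Hypothesis kappa_ge0 : 0 <= kappa.

Lemma cost_J_unifT (a : R -> Omega -> R) :
  cost_J P beta kappa sigma B X0 om (fun=> unifT \x g)%E a =
  (\int[P]_(w in setT) \int[lebesgue_measure]_(t in halfline)
     ((expR (- (beta * t)))%:E * (((a t w) ^+ 2 / 2)%:E + kappa%:E)))%E.
Proof.
by apply: eq_integral => w _; apply: eq_integral => t _; rewrite cost_c_unifT mule1.
Qed.

Lemma ereal_inf_cost_J_unifT :
  ereal_inf [set cost_J P beta kappa sigma B X0 om (fun=> unifT \x g)%E a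
            | a in admissible P F] =
  cost_J P beta kappa sigma B X0 om (fun=> unifT \x g)%E (fun _ _ => 0).
Proof.
apply/le_anti/andP; split.
  by apply: ereal_inf_lbound; exists (fun _ _ => 0); first exact: admissible_zero_control.
apply/ereal_infP => _ [a _ <-]; rewrite !cost_J_unifT.
have integrand_ge0 (r : R) t :
    (0 <= (expR (- (beta * t)))%:E * ((r ^+ 2 / 2)%:E + kappa%:E))%E.
  by rewrite -EFinD -EFinM lee_fin mulr_ge0 ?expR_ge0 // addr_ge0 // divr_ge0 ?sqr_ge0.
apply: ge0_le_integral_nonmeasurable => [w _|w _].
  by apply: integral_ge0 => t _; have := integrand_ge0 0 t; rewrite expr0n.
apply: ge0_le_integral_nonmeasurable => [t _|t _].
  by have := integrand_ge0 0 t; rewrite expr0n.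
rewrite -!EFinD -!EFinM lee_fin ler_wpM2l ?expR_ge0 // lerD2r expr0n /= mul0r.
by rewrite divr_ge0 // sqr_ge0.
Qed.

End zero_control.

Lemma state_zero_control {R : realType} d (Omega : measurableType d) (sigma om t : R)
    (B : R -> Omega -> R) (X0 : Omega -> R) :
  state sigma B X0 om (fun _ _ => 0) t = fun w => X0 w + (om * t + sigma * B t w).
Proof.
by apply/funext => w; rewrite /state /Rintegral integral0 addr0 addrA.
Qed.

Section state_law.
Context {R : realType} d (Omega : measurableType d) (P : probability Omega R).
Variables (F : R -> set (set Omega)) (B : R -> Omega -> R) (sigma om : R).
Hypotheses (F_usual : usual_filtration P F) (B_brownian : F_brownian P F B).

Lemma brownian_start0_ae : exists N : set Omega,
  [/\ measurable N, P N = 0%E & forall w, ~ N w -> B 0 w = 0].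
Proof.
case: B_brownian => _ [N [mN PN0 subN]] _; exists N; split => // w Nw.
by apply: contrapT => B0w; apply/Nw/subN => -[].
Qed.

Lemma measurable_brownian t : 0 <= t -> measurable_fun setT (B t : Omega -> Rm R).
Proof.
case: B_brownian => mB _ _ t_ge0.
exact (measurable_wrt_filtration F_usual t_ge0 (mB _ t_ge0)).
Qed.

Variable X0 : Omega -> R.
Hypotheses (X0_F0 : measurable_wrt (F 0) X0) (X0_dom : forall w, torus_dom (X0 w))
  (X0_law : law_T P X0 unifT).

Let mX0 : measurable_fun setT (X0 : Omega -> Rm R).
Proof. exact (measurable_wrt_filtration F_usual (lexx 0) X0_F0). Qed.

Let tmod_X0 w : tmod (X0 w) = X0 w.
Proof. by apply: tmod_id; have := X0_dom w; rewrite /torus_dom /= in_itv. Qed.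

Lemma law_T_increment (t : R) : 0 <= t ->
  law_T P (fun w => X0 w + (om * t + sigma * (B t w - B 0 w))) unifT.
Proof.
rewrite le_eqVlt => /orP[/eqP<-|t_gt0].
  suff -> : (fun w => X0 w + (om * 0 + sigma * (B 0 w - B 0 w))) = X0 by [].
  by apply/funext => w; rewrite subrr !mulr0 !addr0.
case: B_brownian => _ _ /(_ 0 t (lexx 0) t_gt0) [indep law_incr].
apply: (law_T_add_independent_uniform (m := normal_prob 0 (Num.sqrt (t - 0)))).
- exact: mX0.
- by apply: measurable_funB; apply: measurable_brownian => //; exact: ltW.
- move=> A U mA mU; rewrite setIC indep //; last exact: X0_F0.
  rewrite law_incr // muleC; congr (_ * _)%E.
  by rewrite -X0_law //; congr (P _); apply/seteqP; split => w /=; rewrite tmod_X0.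
Qed.

Lemma law_T_state_zero_control (t : R) : 0 <= t ->
  law_T P (state sigma B X0 om (fun _ _ => 0) t) unifT.
Proof.
move=> t_ge0 U mU; rewrite -(law_T_increment t_ge0 mU) state_zero_control.
have [N [mN PN0 B0]] := brownian_start0_ae.
have mpre (Y : Omega -> R) : measurable_fun setT (Y : Omega -> Rm R) ->
    measurable ((fun w => tmod (Y w)) @^-1` U).
  by move=> mY; rewrite -[_ @^-1` _]setTI; exact: (measurableT_comp measurable_tmod mY).
have mBt := measurable_brownian t_ge0; have mB0 := measurable_brownian (lexx 0).
apply: (measure_eq_modulo_null (mpre _ _) (mpre _ _) mN PN0).
- by apply: measurable_funD => //; apply: measurable_funD => //; exact: measurable_funM.
- apply: measurable_funD => //; apply: measurable_funD => //.
  by apply: measurable_funM => //; exact: measurable_funB.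
apply/seteqP; split=> w /=.
  by have [Nw _|/B0 ->] := pselect (N w); [right|rewrite subr0].
by have [Nw _|/B0 ->] := pselect (N w); [right|rewrite subr0].
Qed.

End state_law.

Theorem lemma2p1 (R : realType) (d : measure_display) (Omega : measurableType d)
  (P : probability Omega R) (F : R -> set (set Omega)) (B : R -> Omega -> R)
  (g : probability (Rm R) R) (kappa beta sigma : R) :
  usual_filtration P F -> F_brownian P F B -> rich_F0 P F ->
  (\int[g]_(om in setT) (`|om|)%:E < +oo)%E ->
  0 <= kappa -> 0 < beta -> 0 < sigma ->
  stationary_MFG_equilibrium P F B beta kappa sigma g (unifT \x g)%E.
Proof.
move=> F_usual B_brownian _ _ kappa_ge0 _ _.
split=> [t _|].
  by split=> [|Bs mBs]; [exact: is_prob_TR_product_unifT|exact: product_unifT_setTX].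
exists (fun _ _ => unifT), setT; split=> //; first exact: probability_setT.
- move=> t _ A mA; split=> [|Bs mBs]; first exact: measurable_cst.
  by rewrite integral_cst //; exact: product_measure1E.
move=> om _; split=> [t _|X0 X0_F0 X0_dom X0_law]; first exact: is_prob_T_unifT.
exists (fun _ _ => 0); split.
- exact: admissible_zero_control.
- by apply: ereal_inf_cost_J_unifT.
- by move=> t t_ge0; apply: (law_T_state_zero_control (F := F)).
Qed.
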